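(* Let $S_n$ be the star on $n$ vertices with edge set $E$, let $f=\{i,j\}\notin E$ be a pair of distinct vertices of $S_n$, and let $B=E\cup\{f\}$. Then the eigenvalues of $\mathfrak{D}_2(S_n)[B,B]$ are $-1$ with multiplicity $n-3$, together with the roots of the cubic polynomial $g(x)=x^3-2(n-1)x^2-7(n-2)x-(n-1)$.
   Context: For a tree $T$, let $\mathcal{V}_2$ be the set of 2-element vertex subsets (edges regarded as elements of $\mathcal{V}_2$). The 2-Steiner distance matrix $\mathfrak{D}_2(T)$ is indexed by $\mathcal{V}_2$, with entry in row $\{i,j\}$, column $\{k,l\}$ equal to the minimum number of edges of a connected subtree of $T$ whose vertex set contains $i,j,k,l$. $M[B,B]$ denotes the principal submatrix with rows and columns indexed by $B$. *)

From HB Require Import structures.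
From mathcomp Require Import all_boot all_order all_algebra.
Set Implicit Arguments. Unset Strict Implicit. Unset Printing Implicit Defensive.
Import Order.TTheory GRing.Theory Num.Theory.

Section Steiner.
Variables (V : finType) (adj : rel V).

Definition edges : {set {set V}} :=
  [set e : {set V} | [exists x, exists y, adj x y && (e == [set x; y])]].

Definition V2 : {set {set V}} := [set e : {set V} | #|e| == 2].

Definition is_subtree (U : {set V}) (F : {set {set V}}) : bool :=
  [&& F \subset edges,
      [forall e in F, e \subset U],
      U != set0,
      [forall x in U, forall y in U,
         connect (fun a b => [set a; b] \in F) x y]
    & #|F|.+1 == #|U| ].

(* The default value #|edges| is
   attained by the whole tree, so for trees the min is the true minimum. *)
Definition steiner (S : {set V}) : nat :=
  \big[minn/#|edges|]_(U : {set V} | S \subset U)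
    \big[minn/#|edges|]_(F : {set {set V}} | is_subtree U F) #|F|.

Definition steiner2 (e1 e2 : {set V}) : nat := steiner (e1 :|: e2).

(* The principal submatrix D_2(T)[B,B], with rows/columns indexed by B
   (enumerated by enum_val; the characteristic polynomial does not depend
   on this ordering). *)
Definition steiner2_sub (R : nzRingType) (B : {set {set V}}) : 'M[R]_#|B| :=
  \matrix_(a < #|B|, b < #|B|) ((steiner2 (enum_val a) (enum_val b))%:R)%R.

End Steiner.

Definition star_adj (n : nat) (c : 'I_n) : rel 'I_n :=
  fun x y => (x != y) && ((x == c) || (y == c)).

(* On a star with centre c, every subtree containing two distinct vertices
   passes through c, so the Steiner distance of a set S with |S| >= 2 is
   |S ∪ {c}| - 1.  On B = E ∪ {f} the entry at (e1, e2) then depends only on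
   whether e1 = e2, whether e1 or e2 is f, and how many endpoints of f a star
   edge contains; hence D_2(S_n)[B,B] = -I + U V with U of size n x 3 and V of
   size 3 x n.  Sylvester's identity a^3 det(aI - UV) = a^n det(aI - VU) at
   a = x + 1 reduces the characteristic polynomial to (x + 1)^(n-3) times the
   3 x 3 determinant det((x + 1) I - V U), which is the cubic g. *)

From mathcomp Require Import all_boot all_order all_algebra ring zify.
Import Order.TTheory GRing.Theory Num.Theory.
Set Implicit Arguments. Unset Strict Implicit.
Local Open Scope ring_scope.

Lemma det_scalar_sub_mulmxC (R : comNzRingType) m k (a : R)
    (U : 'M[R]_(m, k)) (V : 'M[R]_(k, m)) :
  a ^+ k * \det (a%:M - U *m V) = a ^+ m * \det (a%:M - V *m U).
Proof.
pose W := block_mx (a%:M : 'M_m) U V (1%:M : 'M_k).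
have eliminate_V : block_mx 1%:M 0 (-V) a%:M *m W = block_mx a%:M U 0 (a%:M - V *m U).
  rewrite /W mulmx_block !mul1mx !mul0mx !addr0 mulmx1 mulNmx mul_mx_scalar.
  by rewrite mul_scalar_mx addNr mulNmx addrC.
have eliminate_U : W *m block_mx 1%:M 0 (-V) 1%:M = block_mx (a%:M - U *m V) U 0 1%:M.
  by rewrite /W mulmx_block !mulmx1 !mulmx0 mulmxN !add0r mul1mx addrN.
have := congr1 determinant eliminate_U.
rewrite det_mulmx det_lblock det_ublock !det_scalar !expr1n !mulr1 => <-.
have := congr1 determinant eliminate_V.
by rewrite det_mulmx det_lblock det_ublock !det_scalar expr1n mul1r.
Qed.

Lemma char_poly_scalar_add_mulmx (R : idomainType) m k (a : R)
    (U : 'M[R]_(m, k)) (V : 'M[R]_(k, m)) : (k <= m)%N ->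
  char_poly (a%:M + U *m V)
  = ('X - a%:P) ^+ (m - k) * \det (('X - a%:P)%:M - map_mx polyC (V *m U)).
Proof.
move=> le_km; rewrite /char_poly /char_poly_mx map_mxD !map_mxM map_scalar_mx /=.
rewrite opprD addrA -raddfB /=.
have Xa_neq0 : ('X - a%:P) ^+ k != 0 by rewrite expf_neq0 // monic_neq0 ?monicXsubC.
apply: (mulfI Xa_neq0); rewrite det_scalar_sub_mulmxC.
by rewrite mulrA -exprD subnKC.
Qed.

Lemma det_mx33 (R : comNzRingType) (A : 'M[R]_3) :
  \det A = A 0 0 * (A 1 1 * A 2 2 - A 1 2 * A 2 1)
         - A 0 1 * (A 1 0 * A 2 2 - A 1 2 * A 2 0)
         + A 0 2 * (A 1 0 * A 2 1 - A 1 1 * A 2 0).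
Proof.
rewrite (expand_det_row _ 0) !big_ord_recl big_ord0 /cofactor.
rewrite !(expand_det_row _ 0) !big_ord_recl !big_ord0 /cofactor !det_mx11 !mxE /=.
(* The expansion indexes entries by lifted ordinals; going through nat makes
   equal entries syntactically equal for [ring]. *)
pose A' (x y : nat) := A (inord x) (inord y).
have A_nat i j : A i j = A' (val i) (val j) by rewrite /A' !inord_val.
by rewrite !A_nat /= !expr0 !expr1 /A'; ring.
Qed.

Section StarSteiner.
Variables (n : nat) (c : 'I_n).

Local Notation E := (edges (star_adj c)).

Lemma star_edgesE : E = [set [set c; x] | x in [set~ c]].
Proof.
apply/setP => e; rewrite inE; apply/existsP/imsetP => [[x /existsP [y]]|[x]].
  case/andP=> /andP [xy /orP [/eqP xc|/eqP yc]] /eqP ->.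
    by exists y; rewrite ?inE -xc // eq_sym.
  by exists x; rewrite ?inE -yc // setUC.
rewrite !inE => xc ->; exists c; apply/existsP; exists x.
by rewrite /star_adj !eqxx (eq_sym c) xc.
Qed.

Lemma star_edge_eq x y : x != c -> ([set c; x] == [set c; y]) = (x == y).
Proof.
move=> xc; apply/eqP/eqP => [exy|-> //].
have : x \in [set c; y] by rewrite -exy !inE eqxx orbT.
by rewrite !inE (negbTE xc) => /eqP.
Qed.

Lemma star_subtree_center (U : {set 'I_n}) F x y :
  is_subtree (star_adj c) U F -> x \in U -> y \in U -> x != y -> c \in U.
Proof.
case/and5P => FE FU _ Fconn _ xU yU xy.
have /connectP [[|b p] /=] := forall_inP (forall_inP Fconn x xU) y yU.
  by move=> _ yx; rewrite yx eqxx in xy.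
case/andP => xbF _ _.
have /imsetP [z _ xbE] : [set x; b] \in [set [set c; z] | z in [set~ c]].
  by rewrite -star_edgesE (subsetP FE).
by apply: (subsetP (forall_inP FU _ xbF)); rewrite xbE !inE eqxx.
Qed.

Lemma star_is_subtree (U : {set 'I_n}) : c \in U ->
  is_subtree (star_adj c) U [set [set c; x] | x in U :\ c].
Proof.
move=> cU; have card_spokes : #|[set [set c; x] | x in U :\ c]| = #|U :\ c|.
  apply: card_in_imset => x y; rewrite !inE => /andP [xc _] _ /eqP.
  by rewrite star_edge_eq // => /eqP.
have spoke x : x \in U ->
    connect (fun a b => [set a; b] \in [set [set c; x] | x in U :\ c]) c x.
  move=> xU; have [->|xc] := eqVneq x c; first exact: connect0.
  by apply: connect1; apply/imsetP; exists x; rewrite ?inE ?xc.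
apply/and5P; split.
- apply/subsetP => e /imsetP [x]; rewrite in_setD1 => /andP [xc _] ->.
  by rewrite star_edgesE; apply/imsetP; exists x; rewrite ?inE.
- apply/forall_inP => e /imsetP [x]; rewrite !inE => /andP [_ xU] ->.
  by apply/subsetP => z; rewrite !inE => /orP [] /eqP ->.
- by apply/set0Pn; exists c.
- apply/forall_inP => x xU; apply/forall_inP => y yU; apply: connect_trans (spoke y yU).
  have [->|xc] := eqVneq x c; first exact: connect0.
  by apply: connect1; rewrite /= setUC; apply/imsetP; exists x; rewrite ?inE ?xc.
- by rewrite card_spokes (cardsD1 c U) cU.
Qed.

Lemma star_steiner (S : {set 'I_n}) : (1 < #|S|)%N ->
  steiner (star_adj c) S = (#|c |: S| - 1)%N.
Proof.
move=> S_gt1; have cS : c \in c |: S := setU11 c S.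
have spokes := star_is_subtree cS; set F0 := [set _ | x in _] in spokes *.
have /and5P [spokesE _ _ _ /eqP card_spokes] := spokes.
rewrite -card_spokes subn1 /=.
have le_E : (#|F0| <= #|E|)%N := subset_leq_card spokesE.
have ge_subtree (U : {set 'I_n}) F : S \subset U -> is_subtree (star_adj c) U F ->
    (#|F0| <= #|F|)%N.
  move=> SU UF; have [x [y [xS yS xy]]] := card_gt1P S_gt1.
  have cU := star_subtree_center UF (subsetP SU x xS) (subsetP SU y yS) xy.
  have /subset_leq_card : c |: S \subset U by rewrite subUset sub1set cU.
  by case/and5P: UF => _ _ _ _ /eqP <-; rewrite -card_spokes.
apply/eqP; rewrite eqn_leq /steiner -minEnat -!leEnat; apply/andP; split.
  by apply: (bigmin_inf (c |: S)); [exact: subsetU1 | exact: bigmin_le_cond].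
apply/bigmin_geP; split=> // U SU; apply/bigmin_geP; split=> // F.
exact: ge_subtree.
Qed.
End StarSteiner.

Section StarPlusPair.
Variables (R : idomainType) (n : nat) (c i j : 'I_n).
Hypotheses (ij : i != j) (fE : [set i; j] \notin edges (star_adj c)).

Local Notation f := [set i; j].
Local Notation E := (edges (star_adj c)).
Local Notation B := (E :|: [set f]).

Lemma center_notin_f : c \notin f.
Proof.
apply: contra fE; rewrite star_edgesE !inE => /orP [] /eqP ci; apply/imsetP.
  by exists j; rewrite ?inE ci // eq_sym.
by exists i; rewrite ?inE ci // setUC.
Qed.

Lemma i_neq_c : i != c.
Proof. by apply: contraNneq center_notin_f => <-; rewrite !inE eqxx. Qed.

Lemma j_neq_c : j != c.
Proof. by apply: contraNneq center_notin_f => <-; rewrite !inE eqxx orbT. Qed.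

Lemma f_neq_spoke x : (f == [set c; x]) = false.
Proof. by apply: contraNF center_notin_f => /eqP ->; rewrite !inE eqxx. Qed.

Lemma B_spokesE : B = f |: [set [set c; x] | x in [set~ c]].
Proof. by rewrite star_edgesE setUC. Qed.

Lemma card_B : #|B| = n.
Proof.
rewrite B_spokesE cardsU1 -{1}star_edgesE fE card_in_imset ?cardsC1 ?card_ord.
  by case: n c => [[]|m _].
by move=> x y; rewrite !inE => xc _ /eqP; rewrite star_edge_eq // => /eqP.
Qed.

(* On B, [avoids_c] is the indicator of f and [meets_f] counts the endpoints
   of f lying on a star edge. *)
Definition avoids_c (e : {set 'I_n}) : R := (c \notin e)%:R.
Definition meets_f (e : {set 'I_n}) : R :=
  ((c \in e) && (i \in e))%:R + ((c \in e) && (j \in e))%:R.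

Lemma avoids_c_f : avoids_c f = 1.
Proof. by rewrite /avoids_c center_notin_f. Qed.

Lemma meets_f_f : meets_f f = 0.
Proof. by rewrite /meets_f (negbTE center_notin_f) addr0. Qed.

Lemma avoids_c_spoke x : avoids_c [set c; x] = 0.
Proof. by rewrite /avoids_c !inE eqxx. Qed.

Lemma meets_f_spoke x : x != c -> meets_f [set c; x] = (x == i)%:R + (x == j)%:R.
Proof.
by move=> xc; rewrite /meets_f !inE eqxx (negbTE i_neq_c) (negbTE j_neq_c) !(eq_sym x).
Qed.

Lemma in_B_cases e : e \in B -> e = f \/ exists2 x, x != c & e = [set c; x].
Proof.
rewrite B_spokesE => /setU1P [->|/imsetP [x]]; first by left.
by rewrite in_setC1 => xc ->; right; exists x.
Qed.

Lemma steiner2_B_card e1 e2 : e1 \in B ->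
  steiner2 (star_adj c) e1 e2 = (#|c |: (e1 :|: e2)| - 1)%N.
Proof.
move=> e1B; rewrite /steiner2 star_steiner //.
apply: leq_trans (subset_leq_card (subsetUl e1 e2)).
by case/in_B_cases: e1B => [->|[x xc ->]]; rewrite cards2 ?ij // eq_sym xc.
Qed.

Lemma card_f_spoke_hull y : y != c ->
  (#|c |: (f :|: [set c; y])| - 1)%:R = 3 - meets_f [set c; y] :> R.
Proof.
move=> yc; have -> : c |: (f :|: [set c; y]) = y |: (c |: f).
  by apply/setP => z; rewrite !inE; do ![case: (_ == _)].
rewrite cardsU1 cardsU1 center_notin_f cards2 ij meets_f_spoke // !inE (negbTE yc).
rewrite !addnS subn1 /=.
have [-> | _] := eqVneq y i; first by rewrite (negbTE ij) /=; ring.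
by case: (y == j) => /=; ring.
Qed.

Lemma steiner2_B e1 e2 : e1 \in B -> e2 \in B ->
  (steiner2 (star_adj c) e1 e2)%:R = - (e1 == e2)%:R + (2 + avoids_c e2)
    + avoids_c e1 * (1 - avoids_c e2 - meets_f e2) + meets_f e1 * - avoids_c e2 :> R.
Proof.
move=> e1B e2B; rewrite steiner2_B_card //.
case/in_B_cases: e1B => [->|[x xc ->]]; case/in_B_cases: e2B => [->|[y yc ->]].
- rewrite setUid cardsU1 center_notin_f cards2 ij eqxx avoids_c_f meets_f_f addKn /=; ring.
- rewrite card_f_spoke_hull // f_neq_spoke avoids_c_f meets_f_f avoids_c_spoke /=; ring.
- rewrite (setUC _ f) card_f_spoke_hull // eq_sym f_neq_spoke.
  by rewrite avoids_c_f meets_f_f avoids_c_spoke /=; ring.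
- have -> : c |: ([set c; x] :|: [set c; y]) = c |: (x |: [set y]).
    by apply/setP => z; rewrite !inE; do ![case: (_ == _)].
  rewrite cardsU1 cardsU1 cards1 star_edge_eq // !avoids_c_spoke !inE.
  rewrite (eq_sym c x) (eq_sym c y) (negbTE xc) (negbTE yc) /= !addnS subn1 /=.
  by case: (x == y) => /=; ring.
Qed.

Lemma sum_over_B (phi : R -> R -> R) :
  \sum_(p < #|B|) phi (avoids_c (enum_val p)) (meets_f (enum_val p))
  = phi 1 0 + phi 0 1 *+ 2 + phi 0 0 *+ (n - 3).
Proof.
rewrite -(big_enum_val (fun e => phi (avoids_c e) (meets_f e))) /= B_spokesE.
rewrite big_setU1 /=; last by rewrite -star_edgesE.
rewrite big_imset /=; last first.
  by move=> x y; rewrite !inE => xc _ /eqP; rewrite star_edge_eq // => /eqP.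
have jc := j_neq_c; have ic := i_neq_c.
rewrite (big_setD1 i) ?inE // (big_setD1 j); last by rewrite !inE jc eq_sym ij.
rewrite avoids_c_f meets_f_f !avoids_c_spoke !meets_f_spoke //.
rewrite !eqxx (eq_sym j i) (negbTE ij).
rewrite /= addr0 add0r (addrA (phi 0 1)) -mulr2n addrA; congr (_ + _).
have card_rest : #|[set~ c] :\ i :\ j| = (n - 3)%N.
  have := cardsD1 j ([set~ c] :\ i); have := cardsD1 i [set~ c].
  by rewrite cardsC1 card_ord !inE ic jc eq_sym ij /=; lia.
rewrite -card_rest -sumr_const; apply: eq_bigr => x.
rewrite !inE => /andP [xj /andP [xi xc]].
by rewrite avoids_c_spoke meets_f_spoke // (negbTE xi) (negbTE xj) addr0.
Qed.

Definition left_coef (a b : R) : seq R := [:: 1; a; b].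
Definition right_coef (a b : R) : seq R := [:: 2 + a; 1 - a - b; - a].

Definition lowrank_U : 'M[R]_(#|B|, 3) :=
  \matrix_(p, l) (left_coef (avoids_c (enum_val p)) (meets_f (enum_val p)))`_l.
Definition lowrank_V : 'M[R]_(3, #|B|) :=
  \matrix_(k, q) (right_coef (avoids_c (enum_val q)) (meets_f (enum_val q)))`_k.

Lemma steiner2_sub_lowrank :
  steiner2_sub (star_adj c) R B = (-1)%:M + lowrank_U *m lowrank_V.
Proof.
apply/matrixP => p q; rewrite !mxE !big_ord_recl big_ord0 !mxE /=.
rewrite steiner2_B ?enum_valP // (inj_eq enum_val_inj).
by case: (p == q) => /=; ring.
Qed.

Lemma det_lowrank_VU : (3 <= n)%N ->
  \det (('X + 1)%:M - map_mx polyC (lowrank_V *m lowrank_U))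
  = 'X ^+ 3 - ((2 * (n - 1))%N)%:R *: 'X ^+ 2
    - ((7 * (n - 2))%N)%:R *: 'X - ((n - 1)%N)%:R%:P.
Proof.
move=> n3.
have -> : lowrank_V *m lowrank_U = \matrix_(k, l)
    let phi a b := (right_coef a b)`_k * (left_coef a b)`_l in
    phi 1 0 + phi 0 1 *+ 2 + phi 0 0 *+ (n - 3).
  apply/matrixP => k l; rewrite !mxE /=.
  have /= <- := sum_over_B (fun a b => (right_coef a b)`_k * (left_coef a b)`_l).
  by apply: eq_bigr => p _; rewrite !mxE.
rewrite det_mx33 !mxE /=.
rewrite !(polyCD, polyCM, polyCN, polyCMn, polyC1, polyC0) -!mul_polyC !polyC_natr.
have -> : (n - 1 = (n - 3) + 2)%N by lia.
have -> : (n - 2 = (n - 3) + 1)%N by lia.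
move: (n - 3)%N => m; rewrite !natrM !natrD.
ring.
Qed.
End StarPlusPair.

Theorem theorem5p3 (R : realFieldType) (n : nat) (c i j : 'I_n) :
  (3 <= n)%N ->
  i != j ->
  [set i; j] \notin edges (star_adj c) ->
  char_poly (steiner2_sub (star_adj c) R (edges (star_adj c) :|: [set [set i; j]]))
  = ('X + 1) ^+ (n - 3)
    * ('X ^+ 3 - ((2 * (n - 1))%N)%:R *: 'X ^+ 2
       - ((7 * (n - 2))%N)%:R *: 'X - ((n - 1)%N)%:R%:P).
Proof.
move=> n3 ij fE.
rewrite (steiner2_sub_lowrank R ij fE) char_poly_scalar_add_mulmx; last by rewrite card_B.
by rewrite polyCN opprK det_lowrank_VU // card_B.
Qed.
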